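(* The hypotheses $\delta(G)\ge 2$ and $g(G)\ge 5$ in the statement ''$\chi_{\mu_2}(G\circ H)\le \chi_{\mu_2}(G)$ for all graphs $H$'' cannot be weakened to $\delta(G)\ge s$, $g(G)\ge t$ with $s<2$ or $t<5$. Specifically: (i) there exist a graph $G$ with $\delta(G)\ge 2$ and $g(G)=4$ and a graph $H$ with $\chi_{\mu_2}(G\circ H)>\chi_{\mu_2}(G)$; (ii) there exist a graph $G$ with $\delta(G)\ge 2$ and $g(G)=3$ and a graph $H$ with $\chi_{\mu_2}(G\circ H)>\chi_{\mu_2}(G)$; (iii) there exist a tree $T$ (so $\delta(T)=1$ and $g(T)=\infty$) and a graph $H$ with $\chi_{\mu_2}(T\circ H)>\chi_{\mu_2}(T)$.
   Context: The lexicographic product $G\circ H$ has vertex set $V(G)\times V(H)$, with $(g,h)$ adjacent to $(g',h')$ iff $gg'\in E(G)$, or $g=g'$ and $hh'\in E(H)$. The girth is the length of a shortest cycle, infinite for forests; $\delta(G)$ is the minimum degree. A set $M\subseteq V(X)$ is a $2$-distance mutual-visibility set if for every two vertices $u,v\in M$ there exists a shortest $u,v$-path of length at most $2$ none of whose internal vertices lies in $M$. $\chi_{\mu_2}(X)$ is the minimum cardinality of a partition of $V(X)$ into $2$-distance mutual-visibility sets. *)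

From mathcomp Require Import all_boot.
Set Implicit Arguments. Unset Strict Implicit. Unset Printing Implicit Defensive.

Record sgraph := SGraph {
  vert :> finType;
  adj : rel vert;
  adj_sym : symmetric adj;
  adj_irr : irreflexive adj }.

Definition lex_adj (G H : sgraph) : rel (vert G * vert H)%type :=
  fun x y => adj x.1 y.1 || ((x.1 == y.1) && adj x.2 y.2).

Lemma lex_adj_sym G H : symmetric (@lex_adj G H).
Proof.
move=> [a b] [c d]; rewrite /lex_adj /= adj_sym [adj b d]adj_sym.
by rewrite [c == a]eq_sym.
Qed.

Lemma lex_adj_irr G H : irreflexive (@lex_adj G H).
Proof. by move=> [a b]; rewrite /lex_adj /= !adj_irr eqxx. Qed.

Definition lexprod (G H : sgraph) : sgraph :=
  SGraph (@lex_adj_sym G H) (@lex_adj_irr G H).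

Definition mindeg_ge (G : sgraph) (s : nat) : Prop :=
  forall v : G, s <= #|[set w : G | adj v w]|.

Definition has_cycle_len (G : sgraph) (k : nat) : Prop :=
  exists s : seq G, [/\ size s = k, 3 <= k, uniq s & cycle (@adj G) s].

Definition girth_is (G : sgraph) (n : nat) : Prop :=
  has_cycle_len G n /\ forall m, m < n -> ~ has_cycle_len G m.

Definition connected (G : sgraph) : Prop :=
  forall x y : G, connect (@adj G) x y.

Definition is_tree (G : sgraph) : Prop :=
  0 < #|G| /\ connected G /\ forall k, ~ has_cycle_len G k.

(* For distinct u, v in M, a shortest
   u,v-path of length <= 2 with no internal vertex in M is either the edge uv
   (when u ~ v), or a path u - w - v with w not in M (then u, v non-adjacent,
   so d(u,v) = 2 and such a path is shortest). *)
Definition mv2 (G : sgraph) (M : {set G}) : bool :=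
  [forall u in M, forall v in M, (u != v) ==>
     (adj u v || [exists w, [&& adj u w, adj w v & w \notin M]])].

(* V(G) can be partitioned into (at most) k 2-distance mutual-visibility sets
   (colour classes of f; empty classes are allowed, which does not change the
   minimum). *)
Definition mv2_colorable (G : sgraph) (k : nat) : bool :=
  [exists f : {ffun G -> 'I_k}, [forall i : 'I_k, mv2 [set x | f x == i]]].

Lemma mv2_colorable_ex (G : sgraph) : exists k, mv2_colorable G k.
Proof.
exists #|G|; apply/existsP; exists [ffun x => enum_rank x].
apply/forallP => i; apply/forallP => u; apply/implyP; rewrite inE ffunE.
move=> /eqP hu; apply/forallP => v; apply/implyP; rewrite inE ffunE => /eqP hv.
apply/implyP => /eqP []; apply: enum_rank_inj; by rewrite hu hv.
Qed.

Definition chi_mu2 (G : sgraph) : nat := ex_minn (mv2_colorable_ex G).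

From mathcomp Require Import all_boot.
Set Implicit Arguments. Unset Strict Implicit. Unset Printing Implicit Defensive.

(* In G o H, with H the edgeless graph on two vertices, every vertex (g, h) has
   a twin (g, ~~ h): the two are non-adjacent and have the same neighbours, so a
   class containing both must leave out one of their common neighbours.  Hence
   the whole vertex set is never a 2-distance mutual-visibility set of G o H,
   whereas it is one for a complete graph: K3 (minimum degree 2, girth 3) and
   K2 (a tree) give (ii) and (iii).  For (i) take two 4-cycles joined by a
   bridge: one class per cycle, except for the two ends of the bridge which form
   the third class, shows chi <= 3, while an exhaustive search shows that the
   product with H has no 3-colouring.  The search colours the vertices one by
   one and backtracks as soon as two non-adjacent vertices of the same colour
   have all their common neighbours already coloured with that colour. *)

Section ChiMu2.
Variable X : sgraph.

Lemma mv2_set0 : mv2 (set0 : {set X}).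
Proof. by apply/forallP => u; rewrite inE. Qed.

Lemma mv2_colorable_widen k k' : k <= k' -> mv2_colorable X k -> mv2_colorable X k'.
Proof.
move=> le_kk' /existsP [f /forallP f_mv2]; apply/existsP.
exists [ffun x => widen_ord le_kk' (f x)]; apply/forallP => i.
have [lt_ik | le_ki] := ltnP i k.
  have -> : [set x | [ffun x => widen_ord le_kk' (f x)] x == i] =
            [set x | f x == Ordinal lt_ik].
    by apply/setP => x; rewrite !inE ffunE -!val_eqE.
  exact: f_mv2.
have -> : [set x | [ffun x => widen_ord le_kk' (f x)] x == i] = set0.
  apply/setP => x; rewrite !inE ffunE -val_eqE /= ltn_eqF //.
  exact: leq_trans (ltn_ord (f x)) le_ki.
exact: mv2_set0.
Qed.

Lemma colorable_chi_mu2_le k : mv2_colorable X k -> chi_mu2 X <= k.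
Proof. by rewrite /chi_mu2; case: ex_minnP => m _; apply. Qed.

Lemma uncolorable_chi_mu2_gt k : ~~ mv2_colorable X k -> k < chi_mu2 X.
Proof.
rewrite /chi_mu2; case: ex_minnP => m col_m _; rewrite ltnNge.
by apply: contra => le_mk; apply: mv2_colorable_widen le_mk col_m.
Qed.

Lemma not_mv2_colorable1 (u v : X) : u != v -> ~~ adj u v -> ~~ mv2_colorable X 1.
Proof.
move=> neq_uv nadj_uv; apply/negP => /existsP [f /forallP /(_ ord0) /forallP /(_ u)].
rewrite inE ord1 eqxx => /forallP /(_ v); rewrite inE ord1 eqxx neq_uv /=.
rewrite (negbTE nadj_uv) /= => /existsP [w /and3P [_ _]]; by rewrite inE ord1 eqxx.
Qed.

End ChiMu2.

Lemma mindeg_ge2 (G : sgraph) :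
  (forall v : G, exists w1 w2, [/\ w1 != w2, adj v w1 & adj v w2]) -> mindeg_ge G 2.
Proof.
move=> nbrs v; have [w1 [w2 [neq_w adj_w1 adj_w2]]] := nbrs v.
apply: leq_trans (_ : 2 <= #|[set w1; w2]|) _; first by rewrite cards2 neq_w.
apply: subset_leq_card.
by apply/subsetP => x; rewrite !inE => /orP [] /eqP ->.
Qed.

Lemma girth_is3 (G : sgraph) : has_cycle_len G 3 -> girth_is G 3.
Proof.
move=> cyc3; split=> // m lt_m3 [s [_ le_3m _ _]].
by move: (leq_ltn_trans le_3m lt_m3); rewrite ltnn.
Qed.

Lemma girth_is4 (G : sgraph) :
  (forall a b c : G, ~~ [&& adj a b, adj b c & adj c a]) ->
  has_cycle_len G 4 -> girth_is G 4.
Proof.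
move=> no_triangle cyc4; split=> // m lt_m4 [s [size_s le_3m _ cyc_s]].
have m3 : m = 3 by apply/eqP; rewrite eqn_leq -ltnS lt_m4.
move: size_s cyc_s; rewrite m3.
case: s => [|a [|b [|c []]]] //= _; rewrite andbT.
by move/negP: (no_triangle a b c).
Qed.

Lemma acyclic_of_card_lt3 (G : sgraph) k : #|G| < 3 -> ~ has_cycle_len G k.
Proof.
move=> lt_G3 [s [<- le_3s uniq_s _]].
have := max_card (mem s); rewrite (card_uniqP uniq_s) => le_sG.
by move: (leq_ltn_trans le_sG lt_G3); rewrite ltnNge le_3s.
Qed.

Section CompleteAndEdgeless.
Variable T : finType.

Definition complete_adj (x y : T) : bool := x != y.
Lemma complete_adj_sym : symmetric complete_adj.
Proof. by move=> x y; rewrite /complete_adj eq_sym. Qed.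
Lemma complete_adj_irr : irreflexive complete_adj.
Proof. by move=> x; rewrite /complete_adj eqxx. Qed.
Definition complete : sgraph := SGraph complete_adj_sym complete_adj_irr.

Definition edgeless_adj (x y : T) : bool := false.
Lemma edgeless_adj_sym : symmetric edgeless_adj. Proof. by []. Qed.
Lemma edgeless_adj_irr : irreflexive edgeless_adj. Proof. by []. Qed.
Definition edgeless : sgraph := SGraph edgeless_adj_sym edgeless_adj_irr.

Lemma mindeg_complete : mindeg_ge complete #|T|.-1.
Proof.
move=> v; rewrite -(cardsC1 v); apply: subset_leq_card.
by apply/subsetP => w; rewrite !inE eq_sym.
Qed.

Lemma complete_connected : connected complete.
Proof. by move=> x y; have [->|neq_xy] := eqVneq x y; [apply: connect0 | apply: connect1]. Qed.

Lemma mv2_colorable_complete : mv2_colorable complete 1.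
Proof.
apply/existsP; exists [ffun=> ord0]; apply/forallP => i.
apply/forallP => u; apply/implyP => _; apply/forallP => v; apply/implyP => _.
by apply/implyP => neq_uv; rewrite /= /complete_adj neq_uv.
Qed.

End CompleteAndEdgeless.

Lemma lexprod_edgeless_uncolorable1 (G : sgraph) (g : G) :
  ~~ mv2_colorable (lexprod G (edgeless bool)) 1.
Proof.
apply: (@not_mv2_colorable1 _ ((g, false) : lexprod G (edgeless bool)) (g, true)).
  by rewrite xpair_eqE andbF.
by rewrite /= /lex_adj /edgeless_adj /= adj_irr andbF.
Qed.

Lemma chi_mu2_complete_lexprod (T : finType) (t : T) :
  chi_mu2 (complete T) < chi_mu2 (lexprod (complete T) (edgeless bool)).
Proof.
apply: leq_ltn_trans (colorable_chi_mu2_le (mv2_colorable_complete T)) _.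
exact: uncolorable_chi_mu2_gt (@lexprod_edgeless_uncolorable1 (complete T) t).
Qed.

Section PrunedSearch.
Variables (A : eqType) (cands : seq A) (bad : pred (seq A)).
Hypothesis bad_rcons : forall s c, bad s -> bad (rcons s c).

(* [if] rather than [&&]: vm_compute evaluates both arguments of [&&], which
   would defeat the pruning; the same holds for [escapes], [stuck], [doomed]. *)
Fixpoint search (n : nat) (s : seq A) : bool :=
  if bad s then false else
  if n is m.+1 then has (fun c => search m (rcons s c)) cands else true.

Lemma bad_cat s t : bad s -> bad (s ++ t).
Proof. by elim: t s => [|c t IH] s; rewrite ?cats0 // -cat_rcons => /(bad_rcons c) /IH. Qed.

Lemma search_complete s t :
  all (fun c => c \in cands) t -> ~~ bad (s ++ t) -> search (size t) s.
Proof.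
elim: t s => [|c t IH] s /=; first by rewrite cats0 => _ /negbTE ->.
case/andP => cand_c cand_t good_st.
have /negbTE -> : ~~ bad s by apply: contra good_st; apply: bad_cat.
by apply/hasP; exists c => //; apply: IH; rewrite ?cat_rcons.
Qed.

Lemma bad_of_search t :
  ~~ search (size t) [::] -> all (fun c => c \in cands) t -> bad t.
Proof. by move=> no_sol cand_t; apply: contraR no_sol => good; apply: search_complete. Qed.

End PrunedSearch.

Section DoomedColourings.
Variables (X : sgraph) (vs : seq X) (k : nat).
Hypothesis vsP : forall x, x \in vs.

(* [col] lists the colours of a prefix of [vs]; [colour_of] gives the
   non-colour [k] to the vertices not coloured yet. *)
Definition colour_of (col : seq nat) (x : X) : nat := nth k col (index x vs).

Definition escapes (col : seq nat) (c : nat) (u v : X) : bool :=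
  has (fun w => if adj u w && adj w v then colour_of col w != c else false) vs.

Definition stuck (col : seq nat) (c : nat) (u v : X) : bool :=
  if [&& c < k, u != v & ~~ adj u v] then ~~ escapes col c u v else false.

Definition doomed (col : seq nat) : bool :=
  has (fun uc => has (fun vd =>
      if uc.2 == vd.2 then stuck col uc.2 uc.1 vd.1 else false)
    (zip vs col)) (zip vs col).

Lemma escapesP col c u v :
  reflect (exists w, [/\ adj u w, adj w v & colour_of col w != c]) (escapes col c u v).
Proof.
apply: (iffP hasP) => [[w _]|[w [uw wv cw]]]; last by exists w; rewrite ?vsP ?uw ?wv.
by case: ifP => // /andP [uw wv] cw; exists w.
Qed.

Lemma stuckE col c u v :
  stuck col c u v = [&& c < k, u != v, ~~ adj u v & ~~ escapes col c u v].
Proof. by rewrite /stuck; case: (c < k) (u != v) (adj u v) => [] [] []. Qed.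

Lemma doomedP col :
  reflect (exists u v c,
            [/\ (u, c) \in zip vs col, (v, c) \in zip vs col & stuck col c u v])
          (doomed col).
Proof.
apply: (iffP hasP) => [[[u c] uc /hasP [[v d] vd]]|[u [v [c [uc vc st]]]]] /=.
  by move: vd; case: eqP => // <- vc st; exists u, v, c.
by exists (u, c) => //; apply/hasP; exists (v, c); rewrite //= eqxx.
Qed.

Lemma colour_of_rcons col d x :
  colour_of col x < k -> colour_of (rcons col d) x = colour_of col x.
Proof.
rewrite /colour_of nth_rcons; have [// | le_col] := ltnP (index x vs) (size col).
by rewrite nth_default // ltnn.
Qed.

Lemma mem_zip_rcons (s : seq X) (t : seq nat) d : {subset zip s t <= zip s (rcons t d)}.
Proof.
elim: s t => [|x s IH] [|y t] //= p; rewrite !inE.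
by case/orP => [-> // | /IH ->]; rewrite orbT.
Qed.

Lemma doomed_rcons col d : doomed col -> doomed (rcons col d).
Proof.
case/doomedP => u [v [c [uc vc]]]; rewrite stuckE => /and4P [lt_ck neq_uv nadj_uv no_esc].
apply/doomedP; exists u, v, c; split; rewrite ?mem_zip_rcons //.
rewrite stuckE lt_ck neq_uv nadj_uv /=.
move: no_esc; apply: contra => /escapesP [w [uw wv cw]]; apply/escapesP; exists w; split=> //.
have [lt_wk | le_kw] := ltnP (colour_of col w) k; first by rewrite -(colour_of_rcons d lt_wk).
by rewrite gtn_eqF // (leq_trans lt_ck le_kw).
Qed.

Lemma colour_of_colouring (f : X -> nat) x : colour_of [seq f y | y <- vs] x = f x.
Proof. by rewrite /colour_of (nth_map x) ?index_mem ?nth_index. Qed.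

Lemma colouring_not_doomed (f : {ffun X -> 'I_k}) :
  [forall i, mv2 [set x | f x == i]] -> ~~ doomed [seq val (f x) | x <- vs].
Proof.
move/forallP=> f_mv2; apply/doomedP => -[u [v [c []]]].
have -> : zip vs [seq val (f x) | x <- vs] = [seq (x, val (f x)) | x <- vs].
  by rewrite -{1}(map_id vs) zip_map.
move=> /mapP [x _ [-> ->]] /mapP [y _ [-> fyx]].
rewrite stuckE => /and4P [_ neq_uv nadj_uv /escapesP []].
move: (f_mv2 (f x)) => /forallP /(_ x) /implyP; rewrite inE eqxx => /(_ isT).
have {}fyx : f y = f x by apply: val_inj.
move=> /forallP /(_ y) /implyP; rewrite inE fyx eqxx => /(_ isT).
rewrite neq_uv (negbTE nadj_uv) /= => /existsP [w /and3P [uw wv]].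
by rewrite inE -val_eqE => fw; exists w; rewrite colour_of_colouring.
Qed.

Lemma colorable_of_not_doomed col :
  size col = size vs -> all (fun c => c < k) col -> ~~ doomed col -> mv2_colorable X k.
Proof.
move=> size_col /allP col_lt_k not_doomed.
have lt_k x : colour_of col x < k by apply/col_lt_k/mem_nth; rewrite size_col index_mem.
have in_zip x : (x, colour_of col x) \in zip vs col.
  rewrite /colour_of -{1}(nth_index x (vsP x)) -nth_zip // mem_nth //.
  by rewrite size_zip size_col minnn index_mem.
apply/existsP; exists [ffun x => Ordinal (lt_k x)]; apply/forallP => i.
apply/forallP => u; apply/implyP; rewrite inE ffunE -val_eqE /= => /eqP cu.
apply/forallP => v; apply/implyP; rewrite inE ffunE -val_eqE /= => /eqP cv.
apply/implyP => neq_uv; case: (boolP (adj u v)) => //= nadj_uv.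
have : ~~ stuck col i u v.
  move: not_doomed; apply: contra => st; apply/doomedP; exists u, v, (i : nat).
  by rewrite -{1}cu -{1}cv !in_zip.
rewrite stuckE -cu lt_k neq_uv nadj_uv negbK => /escapesP [w [uw wv cw]].
by apply/existsP; exists w; rewrite uw wv inE ffunE -val_eqE /= -cu.
Qed.

Lemma uncolorable_of_search :
  ~~ search (iota 0 k) doomed (size vs) [::] -> ~~ mv2_colorable X k.
Proof.
move=> no_sol; apply/negP => /existsP [f /colouring_not_doomed]; apply/negP; rewrite negbK.
apply: (@bad_of_search _ (iota 0 k) _ doomed_rcons); first by rewrite size_map.
by apply/allP => _ /mapP [x _ ->]; rewrite mem_iota add0n ltn_ord.
Qed.

End DoomedColourings.

Definition bools : seq bool := [:: false; true].

Lemma mem_bools b : b \in bools.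
Proof. by case: b. Qed.

Lemma allpairs_full (S T : eqType) (s : seq S) (t : seq T) :
  (forall x, x \in s) -> (forall y, y \in t) ->
  forall p, p \in [seq (x, y) | x <- s, y <- t].
Proof. by move=> sP tP [x y]; apply: allpairs_f. Qed.

(* Vertex ((p, q), s) is vertex (p, q) of the copy s of the 4-cycle K_{2,2},
   whose parts are given by p; the bridge joins the two copies of (true, true). *)
Definition bridged_adj (x y : (bool * bool) * bool) : bool :=
  if x.2 == y.2 then x.1.1 != y.1.1 else (x.1 == (true, true)) && (y.1 == (true, true)).

Lemma bridged_adj_sym : symmetric bridged_adj.
Proof. by move=> x y; rewrite /bridged_adj eq_sym andbC [y.1.1 == _]eq_sym. Qed.

Lemma bridged_adj_irr : irreflexive bridged_adj.
Proof. by move=> x; rewrite /bridged_adj !eqxx. Qed.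

Definition bridged_squares : sgraph := SGraph bridged_adj_sym bridged_adj_irr.

Definition squares_vertices : seq bridged_squares :=
  [seq (pq, s) | pq <- [seq (p, q) | p <- bools, q <- bools], s <- bools].

Lemma squares_verticesP : forall x, x \in squares_vertices.
Proof. exact: allpairs_full (allpairs_full mem_bools mem_bools) mem_bools. Qed.

(* Twins are consecutive and the bridge ends come last: this order keeps the
   search in [product_uncolorable3] small. *)
Definition product_vertices : seq (lexprod bridged_squares (edgeless bool)) :=
  [seq (g, h) | g <- squares_vertices, h <- bools].

Lemma product_verticesP : forall x, x \in product_vertices.
Proof. exact: allpairs_full squares_verticesP mem_bools. Qed.

Lemma mindeg_bridged_squares : mindeg_ge bridged_squares 2.
Proof.
apply: mindeg_ge2 => -[[p q] s]; exists ((~~ p, false), s), ((~~ p, true), s).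
by rewrite /= /bridged_adj /= eqxx; case: p.
Qed.

Lemma bridged_squares_triangle_free (a b c : bridged_squares) :
  ~~ [&& adj a b, adj b c & adj c a].
Proof. by move: a b c => [[[] []] []] [[[] []] []] [[[] []] []]. Qed.

Lemma girth_bridged_squares : girth_is bridged_squares 4.
Proof.
apply: girth_is4; first exact: bridged_squares_triangle_free.
by exists [:: ((false, false), false); ((true, false), false);
              ((false, true), false); ((true, true), false)].
Qed.

Lemma bridged_squares_colorable3 : mv2_colorable bridged_squares 3.
Proof.
apply: (@colorable_of_not_doomed _ _ _ squares_verticesP
  [seq if x.1 == (true, true) then 2 else nat_of_bool x.2 | x <- squares_vertices]).
all: by vm_compute.
Qed.

Lemma product_uncolorable3 : ~~ mv2_colorable (lexprod bridged_squares (edgeless bool)) 3.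
Proof. by apply: (uncolorable_of_search product_verticesP); vm_compute. Qed.

Theorem proposition4p3 :
  (exists (G H : sgraph), [/\ mindeg_ge G 2, girth_is G 4 &
      chi_mu2 G < chi_mu2 (lexprod G H)]) /\
  (exists (G H : sgraph), [/\ mindeg_ge G 2, girth_is G 3 &
      chi_mu2 G < chi_mu2 (lexprod G H)]) /\
  (exists (T H : sgraph), [/\ is_tree T, 1 < #|T| &
      chi_mu2 T < chi_mu2 (lexprod T H)]).
Proof.
split; [|split].
- exists bridged_squares, (edgeless bool); split.
  + exact: mindeg_bridged_squares.
  + exact: girth_bridged_squares.
  + apply: leq_ltn_trans (colorable_chi_mu2_le bridged_squares_colorable3) _.
    exact: uncolorable_chi_mu2_gt product_uncolorable3.
- exists (complete (option bool)), (edgeless bool); split.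
  + by have := @mindeg_complete (option bool); rewrite card_option card_bool.
  + by apply: girth_is3; exists [:: None; Some false; Some true].
  + exact: chi_mu2_complete_lexprod None.
- exists (complete bool), (edgeless bool); split; last exact: chi_mu2_complete_lexprod true.
  + split; first by rewrite card_bool.
    split; first exact: complete_connected.
    by move=> k; apply: acyclic_of_card_lt3; rewrite card_bool.
  + by rewrite card_bool.
Qed.
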